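(* Let $\gamma$ be an $\mathbb{F}$-functorial and $\varphi=\gamma^{(i)}$ for some $i\in\mathbb{N}$. Then $\varphi$ is an $\mathbb{F}$-functorial; moreover, if $\gamma$ is idempotent, then $\varphi$ is an idempotent $\mathbb{F}$-functorial.
   Context: All groups are finite. A functorial is a function $\theta$ assigning to each group $G$ a characteristic subgroup $\theta(G)$ such that $f(\theta(G))=\theta(f(G))$ for every isomorphism $f:G\to G^*$. An $\mathbb{F}$-functorial is a functorial $\gamma$ satisfying, for every group $G$: (F1) $f(\gamma(G))\subseteq\gamma(f(G))$ for every epimorphism $f:G\to G^*$; (F2) $\gamma(N)\subseteq\gamma(G)$ for every $N\trianglelefteq G$; (F3) $C_G(\gamma(G))\subseteq\gamma(G)$; (F4) $\gamma(G)/\Phi(G)\subseteq\mathrm{Soc}(G/\Phi(G))$. $\gamma$ is idempotent if $\gamma(\gamma(G))=\gamma(G)$ for all $G$. $\gamma^{(1)}=\gamma$ and $\gamma^{(i+1)}(G)=\gamma(\gamma^{(i)}(G))$. *)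

From mathcomp Require Import all_boot all_fingroup all_solvable.
Set Implicit Arguments. Unset Strict Implicit. Unset Printing Implicit Defensive.
Local Open Scope group_scope.

Definition gassign := forall gT : finGroupType, {group gT} -> {group gT}.

Definition socle (gT : finGroupType) (G : {set gT}) : {set gT} :=
  <<\bigcup_(M : {group gT} | minnormal M G && (M \subset G)) M>>.

Definition functorial (theta : gassign) : Prop :=
  forall (gT : finGroupType) (G : {group gT}),
    theta gT G \char G /\
    forall (rT : finGroupType) (f : {morphism G >-> rT}),
      'injm f -> f @* theta gT G = theta rT (f @* G)%G.

Definition F_functorial (gamma : gassign) : Prop :=
  functorial gamma /\
  forall (gT : finGroupType) (G : {group gT}),
    [/\ forall (rT : finGroupType) (f : {morphism G >-> rT}),
                   f @* gamma gT G \subset gamma rT (f @* G)%G,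
        forall N : {group gT}, N <| G -> gamma gT N \subset gamma gT G,
        'C_G(gamma gT G) \subset gamma gT G
      & gamma gT G / 'Phi(G) \subset socle (G / 'Phi(G))].

Definition idempotent_f (gamma : gassign) : Prop :=
  forall (gT : finGroupType) (G : {group gT}), gamma gT (gamma gT G) = gamma gT G.

Fixpoint giter (gamma : gassign) (i : nat) : gassign :=
  match i with
  | 0 => fun (gT : finGroupType) (G : {group gT}) => G
  | i'.+1 => fun (gT : finGroupType) (G : {group gT}) => gamma gT (@giter gamma i' gT G)
  end.

From mathcomp Require Import all_boot all_fingroup all_solvable.
Set Implicit Arguments. Unset Strict Implicit. Unset Printing Implicit Defensive.
Local Open Scope group_scope.

(* The F-functorials are closed under composition, so every iterate
   gamma^(i) with i > 0 is one; gamma^(0) is the identity, which in general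
   violates (F4).  Axioms (F1), (F2) and (F4) pass to gamma o phi directly: the image
   of phi(G) under f is normal in phi(f(G)), and gamma(phi(G)) <= phi(G).
   For (F3) let K = gamma(phi(G)) and C = C_G(K), a normal subgroup of G.
   Then phi(C) <= C_{phi(G)}(K) <= K, so C centralizes phi(C), whence
   C <= C_C(phi(C)) <= phi(C) <= K.  If gamma is idempotent, every iterate
   gamma^(i) with i > 0 equals gamma. *)

Definition gcomp (gamma phi : gassign) : gassign :=
  fun gT G => gamma gT (phi gT G).

Definition morphim_closed (gamma : gassign) : Prop :=
  forall gT (G : {group gT}) (rT : finGroupType) (f : {morphism G >-> rT}),
    f @* gamma gT G \subset gamma rT (f @* G)%G.

Definition normal_monotone (gamma : gassign) : Prop :=
  forall gT (G N : {group gT}), N <| G -> gamma gT N \subset gamma gT G.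

Definition self_centralizing (gamma : gassign) : Prop :=
  forall gT (G : {group gT}), 'C_G(gamma gT G) \subset gamma gT G.

Definition Frattini_socle (gamma : gassign) : Prop :=
  forall gT (G : {group gT}), gamma gT G / 'Phi(G) \subset socle (G / 'Phi(G)).

Lemma F_functorialP (gamma : gassign) :
  F_functorial gamma <->
  [/\ functorial gamma, morphim_closed gamma, normal_monotone gamma,
      self_centralizing gamma & Frattini_socle gamma].
Proof.
split=> [[gammaF ax] | [gammaF F1 F2 F3 F4]]; last first.
  by split=> // gT G; split; [apply: F1 | apply: F2 | apply: F3 | apply: F4].
by split=> // gT G; case: (ax gT G).
Qed.

Lemma morphim_restrm_sub (gT rT : finGroupType) (G H : {group gT})
    (sHG : H \subset G) (f : {morphism G >-> rT}) (A : {set gT}) :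
  A \subset H -> restrm sHG f @* A = f @* A.
Proof. by move=> sAH; rewrite morphim_restrm (setIidPr sAH). Qed.

Section Composition.

Variables gamma phi : gassign.

Hypothesis gamma_char : forall gT (G : {group gT}), gamma G \char G.
Hypothesis phi_char : forall gT (G : {group gT}), phi G \char G.

Let sub_gamma gT (G : {group gT}) : gamma G \subset G := char_sub (gamma_char G).
Let sub_phi gT (G : {group gT}) : phi G \subset G := char_sub (phi_char G).

Lemma gcomp_char gT (G : {group gT}) : gcomp gamma phi G \char G.
Proof. exact: char_trans (gamma_char _) (phi_char G). Qed.

Lemma functorial_comp : functorial gamma -> functorial phi ->
  functorial (gcomp gamma phi).
Proof.
move=> gammaF phiF gT G; split=> [|rT f injf]; first exact: gcomp_char.
rewrite /gcomp -(morphim_restrm_sub (sub_phi G) f (sub_gamma _)).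
rewrite ((gammaF _ (phi G)).2 _ _ (injm_restrm (sub_phi G) injf)).
congr (gval (gamma _)).
by apply: group_inj; rewrite /= morphim_restrm setIid (phiF _ _).2.
Qed.

Lemma morphim_closed_comp :
  morphim_closed gamma -> normal_monotone gamma -> morphim_closed phi ->
  morphim_closed (gcomp gamma phi).
Proof.
move=> gammaF1 gammaF2 phiF1 gT G rT f.
have nfH : (f @* phi G)%G <| phi (f @* G)%G.
  exact: normalS (phiF1 _ _ _ f) (sub_phi _)
    (morphim_normal _ (char_normal (phi_char G))).
apply: subset_trans (gammaF2 _ _ _ nfH).
have restr_phiG : (restrm (sub_phi G) f @* phi G)%G = (f @* phi G)%G.
  exact/group_inj/morphim_restrm_sub.
have := gammaF1 _ _ _ (restrm (sub_phi G) f).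
by rewrite restr_phiG morphim_restrm_sub ?sub_gamma.
Qed.

Lemma normal_monotone_comp :
  normal_monotone gamma -> normal_monotone phi ->
  normal_monotone (gcomp gamma phi).
Proof.
move=> gammaF2 phiF2 gT G N nNG.
have nphiN : phi N <| phi G.
  exact: normalS (phiF2 _ _ _ nNG) (sub_phi G) (char_normal_trans (phi_char N) nNG).
exact: gammaF2 nphiN.
Qed.

Lemma self_centralizing_comp :
  normal_monotone phi -> self_centralizing phi -> self_centralizing gamma ->
  self_centralizing (gcomp gamma phi).
Proof.
move=> phiF2 phiF3 gammaF3 gT G; rewrite /gcomp.
set K := gamma (phi G); set C := 'C_G(K)%G.
have nCG : C <| G.
  by apply/char_normal/subcent_char; [exact: char_refl | exact: gcomp_char].
have sPC_K : phi C \subset K.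
  apply: subset_trans (gammaF3 _ (phi G)); rewrite subsetI phiF2 //=.
  exact: subset_trans (sub_phi C) (subsetIr _ _).
have cCPC : C \subset 'C(phi C) by apply: subset_trans (subsetIr _ _) (centS sPC_K).
apply: subset_trans sPC_K; apply: subset_trans (phiF3 _ C).
by rewrite subsetI subxx.
Qed.

Lemma Frattini_socle_comp : Frattini_socle phi -> Frattini_socle (gcomp gamma phi).
Proof.
move=> phiF4 gT G; apply: subset_trans (phiF4 _ G).
exact/quotientS/sub_gamma.
Qed.

End Composition.

Lemma F_functorial_comp (gamma phi : gassign) :
  F_functorial gamma -> F_functorial phi -> F_functorial (gcomp gamma phi).
Proof.
move=> /F_functorialP[gammaF gammaF1 gammaF2 gammaF3 _].
move=> /F_functorialP[phiF phiF1 phiF2 phiF3 phiF4].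
have gamma_char gT (G : {group gT}) := (gammaF gT G).1.
have phi_char gT (G : {group gT}) := (phiF gT G).1.
apply/F_functorialP; split.
- exact: functorial_comp.
- exact: morphim_closed_comp.
- exact: normal_monotone_comp.
- exact: self_centralizing_comp.
- exact: Frattini_socle_comp.
Qed.

Lemma F_functorial_giter (gamma : gassign) (i : nat) :
  F_functorial gamma -> 0 < i -> F_functorial (giter gamma i).
Proof.
move=> Fgamma; case: i => // n _; elim: n => // n IHn.
exact: F_functorial_comp.
Qed.

Lemma giter_idem (gamma : gassign) (i : nat) gT (G : {group gT}) :
  idempotent_f gamma -> 0 < i -> giter gamma i G = gamma gT G.
Proof.
move=> idem_gamma; case: i => // n _; elim: n => //= n IHn.
by rewrite IHn idem_gamma.
Qed.

Theorem corollary1 (gamma : gassign) (i : nat) :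
  F_functorial gamma -> 0 < i ->
  F_functorial (@giter gamma i) /\
  (idempotent_f gamma -> idempotent_f (@giter gamma i)).
Proof.
move=> Fgamma i_gt0; split; first exact: F_functorial_giter.
by move=> idem_gamma gT G; rewrite !giter_idem ?idem_gamma.
Qed.
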